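(* Let $G$ be a finite group and $N\trianglelefteq G$. Then \[ \gamma^{\mathrm{s}}_{\mathrm{cp}}(G)\le\gamma^{\mathrm{ss}}_{\mathrm{cp}}(N)+\gamma^{\mathrm{s}}_{\mathrm{cp}}(G/N). \]
   Context: For $A\le G$, $\gamma^A_{\mathrm{cp}}(G)$ is the smallest $k$ such that $G=A_1\cdots A_k$ (setwise) with each $A_i$ conjugate to $A$ in $G$ ($\infty$ if none). $\gamma^{\mathrm{s}}_{\mathrm{cp}}(G):=\min\{\gamma^A_{\mathrm{cp}}(G): A\le G\text{ solvable}\}$. A factorization $G=A_1\cdots A_k$ by conjugates of $A$ is a special solvable cp-factorization if (i) $A$ is solvable, (ii) $N_G(A)=A$, and (iii) for every $\alpha\in\mathrm{Aut}(G)$ there is $g\in G$ with $A^\alpha=A^g$; $\gamma^{\mathrm{ss}}_{\mathrm{cp}}(G)$ is the minimal length of such a factorization. *)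

From Stdlib Require Import ClassicalEpsilon.
From mathcomp Require Import all_boot all_fingroup all_solvable.
Set Implicit Arguments. Unset Strict Implicit. Unset Printing Implicit Defensive.

Local Open Scope group_scope.

(* extended naturals N ∪ {∞} as option nat, None = ∞ *)
Definition omin (x y : option nat) : option nat :=
  match x, y with
  | None, _ => y
  | _, None => x
  | Some a, Some b => Some (minn a b)
  end.

Definition oadd (x y : option nat) : option nat :=
  match x, y with
  | Some a, Some b => Some (a + b)%N
  | _, _ => None
  end.

Definition ole (x y : option nat) : Prop :=
  match x, y with
  | _, None => True
  | None, Some _ => False
  | Some a, Some b => (a <= b)%N
  end.

Section CP.
Variable gT : finGroupType.

Definition cp_fact (A G : {set gT}) (k : nat) : bool :=
  [exists s : k.-tuple gT,
     all (fun g => g \in G) s && (G == \prod_(g <- s) (A :^ g))].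

Definition cp_pred (A G : {set gT}) : pred nat := fun k => (0 < k)%N && cp_fact A G k.

Definition gamma_cp (A G : {set gT}) : option nat :=
  match excluded_middle_informative (exists k, cp_pred A G k) with
  | left h => Some (ex_minn h)
  | right _ => None
  end.

Definition gamma_s (G : {group gT}) : option nat :=
  \big[omin/None]_(A : {group gT} | (A \subset G) && solvable A) gamma_cp A G.

Definition special_sub (A G : {group gT}) : bool :=
  [&& A \subset G, solvable A, 'N_G(A) == A &
      [forall a in Aut G, [exists g in G, (a @: A) == A :^ g]]].

Definition gamma_ss (G : {group gT}) : option nat :=
  \big[omin/None]_(A : {group gT} | special_sub A G) gamma_cp A G.

End CP.

From Stdlib Require Import ClassicalEpsilon.
From mathcomp Require Import all_boot all_fingroup all_solvable.
Set Implicit Arguments. Unset Strict Implicit. Unset Printing Implicit Defensive.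

(* Let A be a special solvable subgroup of N and B a solvable subgroup of G/N
   realizing the two minima, with N = A^n_1...A^n_a and G/N = B^x_1...B^x_b.
   Since every automorphism of N moves A to an N-conjugate, the Frattini
   argument gives G = N N_G(A), so K := N_G(A) ∩ (preimage of B) satisfies
   K/N = B.  As K contains A, and K ∩ N lies in
   N_N(A) = A, K is solvable; and lifting the x_i to g_i in G,
   G = A^n_1...A^n_a K^g_1...K^g_b = K^n_1...K^n_a K^g_1...K^g_b. *)

Local Open Scope group_scope.

Lemma ole_trans x y z : ole x y -> ole y z -> ole x z.
Proof. by case: x; case: y; case: z => //= a b c; apply: leq_trans. Qed.

Lemma ole_ominl x y : ole (omin x y) x.
Proof. by case: x; case: y => //= *; rewrite ?geq_minl ?geq_minr. Qed.

Lemma ole_ominr x y : ole (omin x y) y.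
Proof. by case: x; case: y => //= *; rewrite ?geq_minl ?geq_minr. Qed.

Lemma big_omin_le (I : eqType) (r : seq I) (P : pred I) F i :
  i \in r -> P i -> ole (\big[omin/None]_(j <- r | P j) F j) (F i).
Proof.
elim: r => //= j r IH; rewrite inE big_cons => /orP[/eqP<- Pi|ir Pi].
  by rewrite Pi; apply: ole_ominl.
case: ifP => _; last exact: IH.
exact: ole_trans (ole_ominr _ _) (IH ir Pi).
Qed.

Lemma big_omin_attained (I : Type) (r : seq I) (P : pred I) F m :
  \big[omin/None]_(j <- r | P j) F j = Some m -> exists2 i, P i & F i = Some m.
Proof.
elim: r m => [|j r IH] m; first by rewrite big_nil.
rewrite big_cons; case: ifP => Pj; last exact: IH.
case E1: (F j) => [a|]; case E2: (\big[omin/None]_(j <- r | P j) F j) => [b|] //=.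
- case=> <-; case: (leqP a b) => ab.
    by exists j => //; rewrite E1 (minn_idPl ab).
  by have [i Pi Fi] := IH _ E2; exists i => //; rewrite Fi (minn_idPr (ltnW ab)).
- by case=> <-; exists j.
- by move=> e; apply: IH; rewrite E2.
Qed.

Lemma gamma_cp_attained (gT : finGroupType) (A G : {set gT}) m :
  gamma_cp A G = Some m -> cp_pred A G m.
Proof.
rewrite /gamma_cp; case: excluded_middle_informative => // h [<-].
by case: ex_minnP.
Qed.

Lemma gamma_cp_le (gT : finGroupType) (A G : {set gT}) m :
  cp_pred A G m -> ole (gamma_cp A G) (Some m).
Proof.
move=> Pm; rewrite /gamma_cp.
case: excluded_middle_informative => [h|[]]; last by exists m.
by case: ex_minnP => n _ /(_ m Pm).
Qed.

Section ConjugateProducts.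
Variable gT : finGroupType.
Implicit Types (X Y : {set gT}) (G H K N : {group gT}) (r : seq gT).

Lemma gamma_s_le_cp G K : K \subset G -> solvable K ->
  ole (gamma_s G) (gamma_cp K G).
Proof. by move=> sKG solK; apply: big_omin_le; rewrite ?mem_index_enum ?sKG. Qed.

Lemma prod_conjS r X Y : X \subset Y ->
  \prod_(g <- r) X :^ g \subset \prod_(g <- r) Y :^ g.
Proof.
move=> sXY; elim: r => [|g r IH]; first by rewrite !big_nil.
by rewrite !big_cons mulgSS // conjSg.
Qed.

Lemma prod_conj_subG r X G : X \subset G -> {subset r <= G} ->
  \prod_(g <- r) X :^ g \subset G.
Proof.
move=> sXG; elim: r => [|g r IH] rG; first by rewrite big_nil sub1G.
rewrite big_cons mul_subG ?IH // => [|h rh]; last by rewrite rG // inE rh orbT.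
by rewrite -(conjGid (rG g (mem_head g r))) conjSg.
Qed.

Lemma quotient_prod_conj N r X : X \subset 'N(N) -> {subset r <= 'N(N)} ->
  (\prod_(g <- r) X :^ g) / N = \prod_(g <- r) (X / N) :^ coset N g.
Proof.
move=> nNX; elim: r => [|g r IH] nNr; first by rewrite !big_nil quotient1.
have nNg : g \in 'N(N) by rewrite nNr ?mem_head.
rewrite !big_cons quotientMl ?IH ?quotientJ // => [h rh|].
  by rewrite nNr // inE rh orbT.
by rewrite -(conjGid nNg) conjSg.
Qed.

Lemma quotient_lift_seq N H (t : seq (coset_of N)) :
  H \subset 'N(N) -> {subset t <= H / N} ->
  exists2 r, {subset r <= H} & map (coset N) r = t.
Proof.
move=> nNH; elim: t => [|x t IH] tHN; first by exists [::].
have [r rH <-] : exists2 r, {subset r <= H} & map (coset N) r = t.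
  by apply: IH => y ty; rewrite tHN // inE ty orbT.
have /morphimP[g _ Hg ->] := tHN x (mem_head x t).
by exists (g :: r) => // h; rewrite inE => /predU1P[->|/rH].
Qed.

Lemma cp_fact_seq (A : {set gT}) G r :
  {subset r <= G} -> G :=: \prod_(g <- r) A :^ g -> cp_fact A G (size r).
Proof.
move=> rG defG; apply/existsP; exists (in_tuple r).
by rewrite -defG eqxx andbT; apply/allP.
Qed.

Lemma cp_fact_ext N G K (A : {group gT}) a b :
  N <| G -> K \subset G -> A \subset K ->
  cp_fact A N a -> cp_fact (K / N) (G / N) b -> cp_fact K G (a + b).
Proof.
case/andP=> sNG nNG sKG sAK /existsP[s /andP[/allP sN /eqP defN]].
case/existsP=> t /andP[/allP tGN /eqP defGN].
have [r rG defr] := quotient_lift_seq nNG tGN.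
have <- : size (s ++ r) = a + b.
  by rewrite size_cat -(size_map (coset N) r) defr !size_tuple.
apply: cp_fact_seq => [g|].
  by rewrite mem_cat => /orP[/sN/(subsetP sNG)|/rG].
apply/eqP; rewrite big_cat eqEsubset mul_subG ?prod_conj_subG //=; last first.
  by move=> g /sN/(subsetP sNG).
have sNsK : N \subset \prod_(g <- s) K :^ g by rewrite {1}defN prod_conjS.
rewrite andbT; apply: subset_trans (mulSg _ sNsK).
have nNr : {subset r <= 'N(N)} by move=> g /rG/(subsetP nNG).
rewrite -quotientSK // quotient_prod_conj ?(subset_trans sKG nNG) //.
have -> : \prod_(g <- r) (K / N) :^ coset N g = \prod_(x <- t) (K / N) :^ x.
  by rewrite -defr big_map.
by rewrite -defGN.
Qed.

Lemma gamma_cp_ext N G K (A : {group gT}) :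
  N <| G -> K \subset G -> A \subset K ->
  ole (gamma_cp K G) (oadd (gamma_cp A N) (gamma_cp (K / N) (G / N))).
Proof.
move=> nNG sKG sAK.
case Ea: (gamma_cp A N) => [a|]; case Eb: (gamma_cp (K / N) (G / N)) => [b|] //=;
  try by case: (gamma_cp K G).
have /andP[a_gt0 factA] := gamma_cp_attained Ea.
have /andP[_ factB] := gamma_cp_attained Eb.
apply: gamma_cp_le; rewrite /cp_pred addn_gt0 a_gt0 /=.
exact: cp_fact_ext nNG sKG sAK factA factB.
Qed.

Lemma solvable_norm_ext N K : K \subset 'N(N) ->
  solvable (K :&: N) -> solvable (K / N) -> solvable K.
Proof.
move=> nNK solKN solKqN; rewrite (series_sol (normalGI nNK (normalG N))) solKN.
have -> : (K :&: N)%G = (N :&: K)%G by apply/val_inj; rewrite /= setIC.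
by rewrite (isog_sol (second_isog nNK)).
Qed.

Lemma quotient_setIpre N H (B : {set coset_of N}) : B \subset H / N ->
  (H :&: coset N @*^-1 B) / N = B.
Proof. by rewrite /quotient morphim_setIpre => /setIidPr. Qed.

(* Frattini argument: conjugation by g in G is an automorphism of N, so it
   moves A to some A^n with n in N, and g n^-1 normalizes A. *)
Lemma special_quotient_norm (A : {group gT}) N G :
  special_sub A N -> N <| G -> 'N_G(A) / N = G / N.
Proof.
case/and4P=> sAN _ _ /forallP autA /andP[sNG nNG].
apply/eqP; rewrite eqEsubset quotientS ?subsetIl //= -(quotientMidr N 'N_G(A)).
rewrite quotientS //.
apply/subsetP=> g Gg; have nNg := subsetP nNG g Gg.
have := autA (conj_aut N g); rewrite Aut_aut => /existsP[n /andP[Nn /eqP defAg]].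
have {}defAg : A :^ g = A :^ n.
  rewrite -defAg; apply: eq_in_imset => x Ax /=.
  by rewrite norm_conj_autE // (subsetP sAN).
rewrite -(mulgKV n g) mem_mulg // inE groupM ?groupV ?(subsetP sNG n Nn) //=.
by apply/normP; rewrite conjsgM defAg -conjsgM mulgV conjsg1.
Qed.

Lemma special_solvable_lift (A : {group gT}) N G (B : {group coset_of N}) :
  special_sub A N -> N <| G -> B \subset G / N -> solvable B ->
  exists K, [/\ K \subset G, solvable K, A \subset K & K / N = B].
Proof.
move=> spA nNG sBGN solB; have [sAN solA /eqP nAN _] := and4P spA.
have [sNG nNG'] := andP nNG.
exists ('N_G(A) :&: coset N @*^-1 B)%G; set K := gval _.
have sKG : K \subset G by rewrite subIset ?subsetIl.
have defB : K / N = B.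
  by rewrite quotient_setIpre // (special_quotient_norm spA nNG).
have sAK : A \subset K.
  rewrite subsetI subsetI normG (subset_trans sAN sNG) /=.
  exact: subset_trans sAN (sub_cosetpre B).
split=> //; apply: solvable_norm_ext (subset_trans sKG nNG') _ _; last first.
  by rewrite defB.
have sKN_NA : K :&: N \subset 'N_N(A).
  by rewrite subsetI subsetIr /= subIset // subIset ?subsetIr.
by rewrite nAN in sKN_NA; apply: solvableS solA.
Qed.

End ConjugateProducts.

Theorem lemma14 (gT : finGroupType) (G N : {group gT}) (nNG : N <| G) :
  ole (gamma_s G) (oadd (gamma_ss N) (gamma_s (G / N)%G)).
Proof.
case Ea: (gamma_ss N) => [a|]; last by case: (gamma_s G).
case Eb: (gamma_s (G / N)%G) => [b|]; last by case: (gamma_s G).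
have [A spA defa] := big_omin_attained Ea.
have [B /andP[sBGN solB] defb] := big_omin_attained Eb.
have [K [sKG solK sAK defB]] := special_solvable_lift spA nNG sBGN solB.
apply: ole_trans (gamma_s_le_cp sKG solK) _.
by have := gamma_cp_ext nNG sKG sAK; rewrite defB defa defb.
Qed.
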